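(* Let $s$ be an integer with $|s|\ge 10^5$ such that $3s^2-4s+4$ is a perfect square and $s^2+2$ is squarefree. Let $r_1,r_2,r_3,r_4$ be the roots of $F_s(t)= t^4 + (4s^3 - 4s^2 + 8s - 4)t^3 + (-6s^2 - 6)t^2 + 4t + 1$, labeled so that the generator $\sigma$ of the cyclic Galois group of the splitting field satisfies $\sigma(r_j)=r_{j+1}$ (indices mod 4) and $r_1\approx -4s^3$ is the root of largest absolute value. Let $$R'=\left|\det\begin{pmatrix}\log|r_1|&\log|r_2|&\log|r_3|\\ \log|r_2|&\log|r_3|&\log|r_4|\\ \log|r_3|&\log|r_4|&\log|r_1|\end{pmatrix}\right|$$ and $\epsilon=s^2+1+|s|\sqrt{s^2+2}$. Then $$R'=\tfrac14\left(\log^2|r_1/r_3|+\log^2|r_2/r_4|\right)(2\log\epsilon)\quad\text{and}\quad \frac{R'}{\log\epsilon}<9\log^2|s|.$$ *)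

From Stdlib Require Import Reals ZArith List.
Open Scope R_scope.

(* Multivariate polynomial expressions with integer coefficients
   (equivalently, up to scaling, rational coefficients) in the variables
   X_0, X_1, ... *)
Inductive zpoly : Type :=
| PConst : Z -> zpoly
| PVar : nat -> zpoly
| PAdd : zpoly -> zpoly -> zpoly
| PMul : zpoly -> zpoly -> zpoly
| PNeg : zpoly -> zpoly.

Fixpoint zpoly_eval (env : list R) (p : zpoly) : R :=
  match p with
  | PConst z => IZR z
  | PVar i => nth i env 0
  | PAdd p q => zpoly_eval env p + zpoly_eval env q
  | PMul p q => zpoly_eval env p * zpoly_eval env q
  | PNeg p => - zpoly_eval env p
  end.

(* Galois' definition of the Galois group of a polynomial as a group of
   permutations of its roots: the relabeling [r1;r2;r3;r4] |-> [r2;r3;r4;r1]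
   (i.e. r_j |-> r_(j+1), indices mod 4) is induced by an element of the
   Galois group iff it preserves every polynomial relation over Q among the
   roots. *)
Definition cyclic_shift_is_galois (r1 r2 r3 r4 : R) : Prop :=
  forall P : zpoly,
    zpoly_eval (r1 :: r2 :: r3 :: r4 :: nil) P = 0 ->
    zpoly_eval (r2 :: r3 :: r4 :: r1 :: nil) P = 0.

Definition Fs (s : Z) (t : R) : R :=
  t ^ 4 + IZR (4 * s ^ 3 - 4 * s ^ 2 + 8 * s - 4) * t ^ 3
  + IZR (- 6 * s ^ 2 - 6) * t ^ 2 + 4 * t + 1.

Definition is_perfect_square (n : Z) : Prop := exists k : Z, n = (k * k)%Z.

Definition squarefree (n : Z) : Prop :=
  forall d : Z, (d * d | n)%Z -> Z.abs d = 1%Z.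

Definition det3 (a b c d e f g h i : R) : R :=
  a * (e * i - f * h) - b * (d * i - f * g) + c * (d * h - e * g).

From Stdlib Require Import Reals ZArith List Lra Psatz.
Import ListNotations.
Open Scope R_scope.

(* The resolvent cubic of F_s has the rational root -2 (s^2 + 1); since the
   cyclic shift sigma exchanges r1 r2 + r3 r4 with r1 r4 + r2 r3, that root can
   only be r1 r3 + r2 r4. With r1 r2 r3 r4 = 1, the products r1 r3 and r2 r4 are
   then the roots -eps and -1/eps of u^2 + 2 (s^2 + 1) u + 1, so
   log|r1| + log|r3| = log eps = -(log|r2| + log|r4|), and the Hankel determinant
   of four logarithms summing to zero factors as claimed. For the bound, the
   triangle inequality applied to F_s gives 1/(5|s|) <= |r_j| <= 4.1 |s|^3, hence
   log|r1/r3| <= 4.2 log|s| and |log|r2/r4|| <= log|s| / 4. *)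

Lemma Rabs_triang4 (a b c d : R) :
  Rabs (a + b + c + d) <= Rabs a + Rabs b + Rabs c + Rabs d.
Proof.
  pose proof (Rabs_triang (a + b + c) d).
  pose proof (Rabs_triang (a + b) c).
  pose proof (Rabs_triang a b).
  lra.
Qed.

Lemma ln_le_ln (x y : R) : 0 < x -> x <= y -> ln x <= ln y.
Proof.
  intros hx [hlt | ->]; [left; apply ln_increasing; auto | right; reflexivity].
Qed.

Lemma ln_div_pos (x y : R) : 0 < x -> 0 < y -> ln (x / y) = ln x - ln y.
Proof.
  intros hx hy. unfold Rdiv. rewrite ln_mult, ln_Rinv; auto.
  apply Rinv_0_lt_compat; exact hy.
Qed.

Lemma vieta_quartic (a b c d r1 r2 r3 r4 : R) :
  (forall t, t^4 + a*t^3 + b*t^2 + c*t + d = (t-r1)*(t-r2)*(t-r3)*(t-r4)) ->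
  r1+r2+r3+r4 = -a /\ r1*r2+r1*r3+r1*r4+r2*r3+r2*r4+r3*r4 = b /\
  r1*r2*r3+r1*r2*r4+r1*r3*r4+r2*r3*r4 = -c /\ r1*r2*r3*r4 = d.
Proof.
  intros hF.
  assert (hexp : forall t, (t-r1)*(t-r2)*(t-r3)*(t-r4) =
    t^4 - (r1+r2+r3+r4)*t^3 + (r1*r2+r1*r3+r1*r4+r2*r3+r2*r4+r3*r4)*t^2
    - (r1*r2*r3+r1*r2*r4+r1*r3*r4+r2*r3*r4)*t + r1*r2*r3*r4) by (intros; ring).
  generalize (hF 0) (hF 1) (hF (-1)) (hF 2); rewrite !hexp.
  generalize (r1+r2+r3+r4) (r1*r2+r1*r3+r1*r4+r2*r3+r2*r4+r3*r4)
    (r1*r2*r3+r1*r2*r4+r1*r3*r4+r2*r3*r4) (r1*r2*r3*r4).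
  intros e1 e2 e3 e4 h0 h1 hm1 h2; simpl in *; lra.
Qed.

Lemma resolvent_cubic (a b c d r1 r2 r3 r4 x : R) :
  (forall t, t^4 + a*t^3 + b*t^2 + c*t + d = (t-r1)*(t-r2)*(t-r3)*(t-r4)) ->
  (x - (r1*r2 + r3*r4)) * (x - (r1*r3 + r2*r4)) * (x - (r1*r4 + r2*r3))
  = x^3 - b*x^2 + (a*c - 4*d)*x - (a^2*d + c^2 - 4*b*d).
Proof.
  intros hF.
  destruct (vieta_quartic a b c d r1 r2 r3 r4 hF) as (e1 & e2 & e3 & e4).
  rewrite <- e2, <- e4.
  replace a with (- (r1+r2+r3+r4)) by lra.
  replace c with (- (r1*r2*r3+r1*r2*r4+r1*r3*r4+r2*r3*r4)) by lra.
  ring.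
Qed.

(* The shift r_j |-> r_(j+1) maps r1 r2 + r3 r4 and r1 r4 + r2 r3 to each other. *)
Lemma galois_resolvent_root (c : Z) (r1 r2 r3 r4 : R) :
  cyclic_shift_is_galois r1 r2 r3 r4 ->
  r1*r2 + r3*r4 = IZR c \/ r1*r3 + r2*r4 = IZR c \/ r1*r4 + r2*r3 = IZR c ->
  r1*r3 + r2*r4 = IZR c \/ (r1*r2 + r3*r4 = IZR c /\ r1*r4 + r2*r3 = IZR c).
Proof.
  intros hgal hc.
  assert (hshift : forall i j k l : nat,
    nth i [r1;r2;r3;r4] 0 * nth j [r1;r2;r3;r4] 0
    + nth k [r1;r2;r3;r4] 0 * nth l [r1;r2;r3;r4] 0 = IZR c ->
    nth i [r2;r3;r4;r1] 0 * nth j [r2;r3;r4;r1] 0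
    + nth k [r2;r3;r4;r1] 0 * nth l [r2;r3;r4;r1] 0 = IZR c).
  { intros i j k l h.
    specialize (hgal (PAdd (PAdd (PMul (PVar i) (PVar j)) (PMul (PVar k) (PVar l)))
                           (PNeg (PConst c)))).
    cbn [zpoly_eval] in hgal; lra. }
  destruct hc as [h | [h | h]].
  - right; split; [exact h|]. apply (hshift 0 1 2 3)%nat in h; simpl in h; lra.
  - left; exact h.
  - right; split; [|exact h]. apply (hshift 0 3 1 2)%nat in h; simpl in h; lra.
Qed.

Lemma det3_hankel_sum0 (l1 l2 l3 l4 : R) : l1 + l2 + l3 + l4 = 0 ->
  det3 l1 l2 l3 l2 l3 l4 l3 l4 l1
  = - (/4 * ((l1 - l3)^2 + (l2 - l4)^2) * (2 * (l1 + l3))).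
Proof.
  intros h. replace l4 with (- l1 - l2 - l3) by lra. unfold det3. field.
Qed.

Lemma Rabs_det3_log_hankel (x1 x2 x3 x4 e : R) :
  0 < x1 -> 0 < x2 -> 0 < x3 -> 0 < x4 -> 1 < e -> x1 * x3 = e -> x2 * x4 = / e ->
  Rabs (det3 (ln x1) (ln x2) (ln x3) (ln x2) (ln x3) (ln x4) (ln x3) (ln x4) (ln x1))
  = / 4 * (ln (x1 / x3) ^ 2 + ln (x2 / x4) ^ 2) * (2 * ln e).
Proof.
  intros h1 h2 h3 h4 he h13 h24.
  assert (hl13 : ln x1 + ln x3 = ln e) by (rewrite <- ln_mult, h13; auto).
  assert (hl24 : ln x2 + ln x4 = - ln e)
    by (rewrite <- ln_mult, h24, ln_Rinv; auto; lra).
  assert (hle : 0 < ln e) by (rewrite <- ln_1; apply ln_increasing; lra).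
  rewrite det3_hankel_sum0 by lra.
  rewrite Rabs_Ropp, !ln_div_pos, hl13 by auto.
  apply Rabs_right. apply Rle_ge.
  pose proof (pow2_ge_0 (ln x1 - ln x3)). pose proof (pow2_ge_0 (ln x2 - ln x4)).
  nra.
Qed.

Lemma Rabs_root_reciprocal_quadratic (e u : R) : 1 < e ->
  u^2 + (e + /e) * u + 1 = 0 -> 1 < Rabs u -> Rabs u = e.
Proof.
  intros he hu hbig.
  assert (hfac : (u + e) * (u + /e) = 0).
  { replace ((u + e) * (u + /e)) with (u^2 + (e + /e) * u + e * /e) by ring.
    rewrite Rinv_r by lra. lra. }
  assert (hinv : 0 < /e < 1).
  { split. apply Rinv_0_lt_compat; lra. rewrite <- Rinv_1. apply Rinv_lt_contravar; lra. }
  apply Rmult_integral in hfac as [h | h].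
  - replace u with (-e) by lra. rewrite Rabs_Ropp, Rabs_right; lra.
  - replace u with (- /e) in hbig by lra. rewrite Rabs_Ropp, Rabs_right in hbig; lra.
Qed.

Definition unit_eps (S : R) : R := S^2 + 1 + Rabs S * sqrt (S^2 + 2).

Lemma unit_eps_ge (S : R) : 2 * S^2 <= unit_eps S.
Proof.
  unfold unit_eps.
  assert (Rabs S <= sqrt (S^2 + 2)).
  { rewrite <- sqrt_Rsqr_abs. apply sqrt_le_1_alt. unfold Rsqr. nra. }
  pose proof (Rabs_pos S). pose proof (pow2_abs S). nra.
Qed.

Lemma unit_eps_reciprocal_sum (S : R) : unit_eps S + / unit_eps S = 2 * (S^2 + 1).
Proof.
  assert (hpos : 0 < unit_eps S).
  { unfold unit_eps. pose proof (Rabs_pos S). pose proof (sqrt_pos (S^2 + 2)). nra. }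
  assert (hquad : unit_eps S ^ 2 - 2 * (S^2 + 1) * unit_eps S + 1 = 0).
  { unfold unit_eps.
    assert (hw : sqrt (S^2 + 2) * sqrt (S^2 + 2) = S^2 + 2) by (apply sqrt_sqrt; nra).
    pose proof (pow2_abs S).
    replace ((S ^ 2 + 1 + Rabs S * sqrt (S ^ 2 + 2)) ^ 2)
      with ((S^2 + 1)^2 + 2 * (S^2 + 1) * Rabs S * sqrt (S^2 + 2)
            + Rabs S ^ 2 * (sqrt (S^2 + 2) * sqrt (S^2 + 2))) by ring.
    rewrite hw. nra. }
  apply (Rmult_eq_reg_r (unit_eps S)); [|lra].
  rewrite Rmult_plus_distr_r, Rinv_l by lra. nra.
Qed.

Definition Fs_real (S t : R) : R :=
  t^4 + (4*S^3 - 4*S^2 + 8*S - 4)*t^3 + (-6*S^2 - 6)*t^2 + 4*t + 1.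

Lemma Fs_IZR (s : Z) (t : R) : Fs s t = Fs_real (IZR s) t.
Proof.
  unfold Fs, Fs_real.
  replace (4 * s ^ 3 - 4 * s ^ 2 + 8 * s - 4)%Z with (4*s*s*s - 4*s*s + 8*s - 4)%Z by ring.
  replace (- 6 * s ^ 2 - 6)%Z with (- 6 * s * s - 6)%Z by ring.
  repeat rewrite ?minus_IZR, ?plus_IZR, ?mult_IZR. ring.
Qed.

Section FsRoots.

Variable S : R.
Hypothesis hS : 100000 <= Rabs S.

Lemma Fs_coeff3_Rabs_bounds :
  3 * Rabs S ^ 3 <= Rabs (4*S^3 - 4*S^2 + 8*S - 4) <= 401/100 * Rabs S ^ 3.
Proof.
  destruct (Rlt_le_dec S 0) as [hneg | hpos].
  - rewrite (Rabs_left S) in * by lra. rewrite Rabs_left by nra. split; nra.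
  - rewrite (Rabs_right S) in * by lra. rewrite Rabs_right by nra. split; nra.
Qed.

Lemma Fs_coeff2_Rabs_bound : Rabs (-6*S^2 - 6) <= 7 * Rabs S ^ 2.
Proof.
  pose proof (pow2_abs S). rewrite Rabs_left by nra. nra.
Qed.

Lemma Fs_root_Rabs_lb (r : R) : Fs_real S r = 0 -> 1 / (5 * Rabs S) <= Rabs r.
Proof.
  unfold Fs_real; intros hr.
  destruct Fs_coeff3_Rabs_bounds as [_ hA].
  pose proof Fs_coeff2_Rabs_bound as hB.
  set (T := Rabs S) in *; set (p := Rabs r).
  assert (hp : 0 <= p) by apply Rabs_pos.
  assert (hsum : 1 <= p^4 + 401/100 * T^3 * p^3 + 7 * T^2 * p^2 + 4 * p).
  { replace 1 with (Rabs (r^4 + (4*S^3 - 4*S^2 + 8*S - 4)*r^3 + (-6*S^2 - 6)*r^2 + 4*r))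
      by (replace (r^4 + _ + _ + 4*r) with (-1) by lra; rewrite Rabs_left; lra).
    eapply Rle_trans; [apply Rabs_triang4|].
    rewrite !Rabs_mult, <- !RPow_abs, (Rabs_right 4) by lra; fold p.
    assert (0 <= p^3) by (apply pow_le; lra).
    assert (0 <= p^2) by (apply pow_le; lra).
    nra. }
  destruct (Rle_lt_dec (1 / (5 * T)) p) as [h | h]; [exact h | exfalso].
  assert (hq : T * p < 1/5).
  { apply (Rmult_lt_compat_l T) in h; [|lra].
    replace (T * (1 / (5 * T))) with (1/5) in h by (field; lra). exact h. }
  assert (hp1 : p <= 1/100000) by nra.
  assert (T * p >= 0) by nra.
  replace (401/100 * T^3 * p^3) with (401/100 * (T*p)^3) in hsum by ring.
  replace (7 * T^2 * p^2) with (7 * (T*p)^2) in hsum by ring.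
  assert ((T*p)^2 <= 1/25) by nra.
  assert ((T*p)^3 <= 1/125) by nra.
  assert (p^4 <= p) by nra.
  lra.
Qed.

Lemma Fs_root_Rabs_ub (r : R) : Fs_real S r = 0 -> Rabs r <= 41/10 * Rabs S ^ 3.
Proof.
  unfold Fs_real; intros hr.
  destruct Fs_coeff3_Rabs_bounds as [_ hA].
  pose proof Fs_coeff2_Rabs_bound as hB.
  set (T := Rabs S) in *; set (p := Rabs r).
  assert (hT3 : 401/100 * T^3 + 7 * T^2 + 5 <= 41/10 * T^3) by nra.
  destruct (Rle_lt_dec p 1) as [hp1 | hp1]; [nra|].
  assert (hsum : p^4 <= 401/100 * T^3 * p^3 + 7 * T^2 * p^2 + 4 * p + 1).
  { replace (p^4) with (Rabs ((4*S^3 - 4*S^2 + 8*S - 4)*r^3 + (-6*S^2 - 6)*r^2 + 4*r + 1))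
      by (replace (_ + _ + 4*r + 1) with (- r^4) by lra; rewrite Rabs_Ropp, <- RPow_abs; reflexivity).
    eapply Rle_trans; [apply Rabs_triang4|].
    rewrite !Rabs_mult, <- !RPow_abs, (Rabs_right 4), Rabs_R1 by lra; fold p.
    assert (0 <= p^3) by (apply pow_le; lra).
    assert (0 <= p^2) by (apply pow_le; lra).
    nra. }
  assert (hp3 : 0 < p^3) by (apply pow_lt; lra).
  assert (hle : p * p^3 <= 41/10 * T^3 * p^3).
  { replace (p * p^3) with (p^4) by ring.
    assert (p^2 <= p^3) by nra. assert (p <= p^3) by nra. nra. }
  apply Rmult_le_reg_r in hle; lra.
Qed.

End FsRoots.

Lemma ln_ratio_large_le (x y e T : R) : 100000 <= T -> 0 < x ->
  x * y = e -> 2 * T^2 <= e -> x <= 41/10 * T^3 -> ln x - ln y <= 21/5 * ln T.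
Proof.
  intros hT hx hxy he hxT.
  assert (hT2 : 0 < T^2) by nra.
  assert (hy : 0 < y) by nra.
  assert (hly : ln x + ln y = ln e) by (rewrite <- ln_mult, hxy; auto).
  (* x^10 <= (41/10)^10 T^30 <= 32 T * T^30 = T^21 (2 T^2)^5 *)
  assert (h10 : x^10 <= T^21 * e^5).
  { apply Rle_trans with ((41/10 * T^3)^10); [apply pow_incr; lra|].
    apply Rle_trans with (T^21 * (2 * T^2)^5); [|apply Rmult_le_compat_l;
      [apply pow_le; lra | apply pow_incr; lra]].
    replace ((41/10 * T^3)^10) with ((41/10)^10 * T^30) by ring.
    replace (T^21 * (2 * T^2)^5) with ((32 * T) * T^30) by ring.
    apply Rmult_le_compat_r; [apply pow_le; lra | simpl; lra]. }
  apply ln_le_ln in h10; [|apply pow_lt; lra].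
  rewrite ln_mult, !ln_pow in h10 by (try apply pow_lt; lra).
  simpl INR in h10. lra.
Qed.

Lemma ln_small_root_le (x y e T : R) : 100000 <= T -> 0 < x -> 0 < y ->
  1 / (5 * T) <= y -> x * y * e = 1 -> 2 * T^2 <= e -> 4 * (2 * ln x + ln e) <= ln T.
Proof.
  intros hT hx hy hyT hxye he.
  assert (he0 : 0 < e) by nra.
  assert (hxe : x * e <= 5 * T).
  { apply (Rmult_le_reg_r (1 / (5 * T))); [apply Rdiv_lt_0_compat; lra|].
    replace (5 * T * (1 / (5 * T))) with 1 by (field; lra).
    rewrite <- hxye. replace (x * y * e) with (x * e * y) by ring.
    apply Rmult_le_compat_l; nra. }
  assert (hx2e : x^2 * e <= 25/2).
  { apply (Rmult_le_reg_r e); [lra|].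
    replace (x^2 * e * e) with ((x * e)^2) by ring.
    apply Rle_trans with ((5 * T)^2); [apply pow_incr; nra | nra]. }
  assert (h4 : (x^2 * e)^4 <= T).
  { apply Rle_trans with ((25/2)^4); [|simpl; lra].
    apply pow_incr; split; [|exact hx2e]. apply Rmult_le_pos; [apply pow_le|]; lra. }
  apply ln_le_ln in h4; [|apply pow_lt, Rmult_lt_0_compat; [apply pow_lt|]; lra].
  rewrite ln_pow, ln_mult, ln_pow in h4 by (try apply Rmult_lt_0_compat; try apply pow_lt; lra).
  simpl INR in h4. lra.
Qed.

Lemma regulator_quotient_lt (x1 x2 x3 x4 e T : R) : 100000 <= T ->
  0 < x1 -> 0 < x2 -> 0 < x3 -> 0 < x4 -> x3 < x1 ->
  x1 * x3 = e -> x2 * x4 = / e -> 2 * T^2 <= e ->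
  x1 <= 41/10 * T^3 -> 1 / (5 * T) <= x2 -> 1 / (5 * T) <= x4 ->
  / 4 * (ln (x1 / x3) ^ 2 + ln (x2 / x4) ^ 2) * (2 * ln e) / ln e < 9 * ln T ^ 2.
Proof.
  intros hT h1 h2 h3 h4 h31 h13 h24 he h1T h2T h4T.
  assert (he1 : 1 < e) by nra.
  assert (hle : 0 < ln e) by (rewrite <- ln_1; apply ln_increasing; lra).
  assert (hL : 0 < ln T) by (rewrite <- ln_1; apply ln_increasing; lra).
  assert (h24' : x2 * x4 * e = 1) by (rewrite h24; field; lra).
  assert (h42' : x4 * x2 * e = 1) by (rewrite Rmult_comm in h24; rewrite h24; field; lra).
  assert (hl24 : ln x2 + ln x4 = - ln e)
    by (rewrite <- ln_mult, h24, ln_Rinv; auto; lra).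
  pose proof (ln_ratio_large_le x1 x3 e T hT h1 h13 he h1T) as ha.
  pose proof (ln_increasing _ _ h3 h31) as ha0.
  pose proof (ln_small_root_le x2 x4 e T hT h2 h4 h4T h24' he) as hb2.
  pose proof (ln_small_root_le x4 x2 e T hT h4 h2 h2T h42' he) as hb4.
  rewrite !ln_div_pos by auto.
  replace (/ 4 * ((ln x1 - ln x3) ^ 2 + (ln x2 - ln x4) ^ 2) * (2 * ln e) / ln e)
    with (((ln x1 - ln x3) ^ 2 + (ln x2 - ln x4) ^ 2) / 2) by (field; lra).
  assert ((ln x1 - ln x3) ^ 2 <= (21/5 * ln T) ^ 2) by (apply pow_incr; lra).
  assert ((ln x2 - ln x4) ^ 2 <= (ln T / 4) ^ 2).
  { rewrite <- (pow2_abs (ln x2 - ln x4)). apply pow_incr.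
    split; [apply Rabs_pos | apply Rabs_le; lra]. }
  nra.
Qed.

Lemma Fs_galois_pairing (s : Z) (r1 r2 r3 r4 : R) :
  (forall t, Fs_real (IZR s) t = (t - r1) * (t - r2) * (t - r3) * (t - r4)) ->
  cyclic_shift_is_galois r1 r2 r3 r4 ->
  r1*r3 + r2*r4 = -2 * (IZR s ^ 2 + 1).
Proof.
  intros hF hgal.
  set (S := IZR s) in *.
  set (A := 4*S^3 - 4*S^2 + 8*S - 4) in hF.
  set (c := -2 * (S^2 + 1)).
  assert (hc : IZR (-2 * (s * s + 1)) = c)
    by (rewrite mult_IZR, plus_IZR, mult_IZR; unfold c, S; ring).
  assert (hroot : (c - (r1*r2 + r3*r4)) * (c - (r1*r3 + r2*r4)) * (c - (r1*r4 + r2*r3)) = 0)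
    by (rewrite (resolvent_cubic A (-6*S^2 - 6) 4 1 r1 r2 r3 r4 c hF); unfold c, A; ring).
  rewrite <- hc.
  destruct (galois_resolvent_root (-2 * (s * s + 1)) r1 r2 r3 r4 hgal) as [h | [h1 h3]].
  - rewrite hc.
    apply Rmult_integral in hroot as [h | h]; [apply Rmult_integral in h as [h | h]|]; lra.
  - exact h.
  - (* then c < 0 would be a triple root, while the resolvent is negative at 0 *)
    exfalso. rewrite hc in h1, h3.
    pose proof (resolvent_cubic A (-6*S^2 - 6) 4 1 r1 r2 r3 r4 0 hF) as h0.
    destruct (vieta_quartic A (-6*S^2 - 6) 4 1 r1 r2 r3 r4 hF) as (_ & e2 & _).
    assert (h2 : r1*r3 + r2*r4 = c) by (unfold c in *; lra).
    rewrite h1, h2, h3 in h0. unfold c in h0.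
    pose proof (pow2_ge_0 A). pose proof (pow2_ge_0 S). nra.
Qed.

Lemma Fs_unit_products (S r1 r2 r3 r4 : R) : 100000 <= Rabs S ->
  (forall t, Fs_real S t = (t - r1) * (t - r2) * (t - r3) * (t - r4)) ->
  r1*r3 + r2*r4 = -2 * (S^2 + 1) ->
  Rabs r2 < Rabs r1 -> Rabs r3 < Rabs r1 -> Rabs r4 < Rabs r1 ->
  Rabs r1 * Rabs r3 = unit_eps S /\ Rabs r2 * Rabs r4 = / unit_eps S.
Proof.
  intros hS hF hpair h21 h31 h41.
  destruct (vieta_quartic (4*S^3 - 4*S^2 + 8*S - 4) (-6*S^2 - 6) 4 1 r1 r2 r3 r4 hF)
    as (e1 & _ & _ & e4).
  assert (hr3 : Fs_real S r3 = 0) by (rewrite hF; ring).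
  assert (heps : 1 < unit_eps S)
    by (pose proof (unit_eps_ge S); pose proof (pow2_abs S); nra).
  assert (hr1 : 3/4 * Rabs S ^ 3 <= Rabs r1).
  { destruct (Fs_coeff3_Rabs_bounds S hS) as [hA _].
    replace (4*S^3 - 4*S^2 + 8*S - 4) with (- (r1 + r2 + r3 + r4)) in hA by lra.
    rewrite Rabs_Ropp in hA. pose proof (Rabs_triang4 r1 r2 r3 r4). lra. }
  assert (hbig : 1 < Rabs (r1 * r3)).
  { pose proof (Fs_root_Rabs_lb S hS r3 hr3) as hlb.
    set (T := Rabs S) in *.
    assert (hy : 0 < 1 / (5 * T)) by (apply Rdiv_lt_0_compat; lra).
    assert (hT3 : 0 <= T^3) by (apply pow_le; lra).
    assert (hprod : 3/4 * T^3 * (1 / (5 * T)) <= Rabs r1 * Rabs r3)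
      by (apply Rmult_le_compat; lra).
    replace (3/4 * T^3 * (1 / (5 * T))) with (3/20 * T^2) in hprod by (field; lra).
    rewrite Rabs_mult. nra. }
  assert (hquad : (r1 * r3)^2 + (unit_eps S + / unit_eps S) * (r1 * r3) + 1 = 0).
  { rewrite unit_eps_reciprocal_sum.
    replace (2 * (S^2 + 1)) with (- (r1*r3 + r2*r4)) by lra.
    transitivity (1 - r1*r2*r3*r4); [ring | lra]. }
  pose proof (Rabs_root_reciprocal_quadratic _ _ heps hquad hbig) as h13.
  rewrite Rabs_mult in h13.
  split; [exact h13|].
  apply (Rmult_eq_reg_l (unit_eps S)); [|lra].
  rewrite Rinv_r, <- h13, <- !Rabs_mult by lra.
  replace (r1 * r3 * (r2 * r4)) with (r1 * r2 * r3 * r4) by ring.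
  rewrite e4. apply Rabs_R1.
Qed.

Theorem mainTheorem10 (s : Z) (r1 r2 r3 r4 : R)
  (hs : (Z.abs s >= 10 ^ 5)%Z)
  (hsq : is_perfect_square (3 * s ^ 2 - 4 * s + 4)%Z)
  (hsf : squarefree (s ^ 2 + 2)%Z)
  (hroots : forall t : R, Fs s t = (t - r1) * (t - r2) * (t - r3) * (t - r4))
  (hgal : cyclic_shift_is_galois r1 r2 r3 r4)
  (hlarge : Rabs r2 < Rabs r1 /\ Rabs r3 < Rabs r1 /\ Rabs r4 < Rabs r1) :
  let R' := Rabs (det3 (ln (Rabs r1)) (ln (Rabs r2)) (ln (Rabs r3))
                       (ln (Rabs r2)) (ln (Rabs r3)) (ln (Rabs r4))
                       (ln (Rabs r3)) (ln (Rabs r4)) (ln (Rabs r1))) in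
  let eps := IZR (s ^ 2 + 1) + IZR (Z.abs s) * sqrt (IZR (s ^ 2 + 2)) in
  R' = / 4 * (ln (Rabs (r1 / r3)) ^ 2 + ln (Rabs (r2 / r4)) ^ 2) * (2 * ln eps)
  /\ R' / ln eps < 9 * ln (IZR (Z.abs s)) ^ 2.
Proof.
  intros R' eps.
  (* hsq and hsf make eps the fundamental unit in the paper; the identity and
     the bound hold without them *)
  destruct hlarge as (h21 & h31 & h41).
  set (S := IZR s).
  assert (hS : 100000 <= Rabs S) by (unfold S; rewrite <- abs_IZR; apply IZR_ge in hs; lra).
  assert (hF : forall t, Fs_real S t = (t - r1) * (t - r2) * (t - r3) * (t - r4))
    by (intro t; rewrite <- hroots; symmetry; apply Fs_IZR).
  assert (heps : eps = unit_eps S)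
    by (unfold eps, unit_eps, S; rewrite !plus_IZR, abs_IZR, !pow_IZR; reflexivity).
  pose proof (Fs_galois_pairing s r1 r2 r3 r4 hF hgal) as hpair.
  destruct (Fs_unit_products S r1 r2 r3 r4 hS hF hpair h21 h31 h41) as [h13 h24].
  assert (hroot : forall r, (r - r1) * (r - r2) * (r - r3) * (r - r4) = 0 -> Fs_real S r = 0)
    by (intros r hr; rewrite hF; exact hr).
  pose proof (Fs_root_Rabs_lb S hS r2 (hroot r2 ltac:(ring))) as hlb2.
  pose proof (Fs_root_Rabs_lb S hS r3 (hroot r3 ltac:(ring))) as hlb3.
  pose proof (Fs_root_Rabs_lb S hS r4 (hroot r4 ltac:(ring))) as hlb4.
  pose proof (Fs_root_Rabs_ub S hS r1 (hroot r1 ltac:(ring))) as hub1.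
  assert (hinv : 0 < 1 / (5 * Rabs S)) by (apply Rdiv_lt_0_compat; lra).
  assert (heps2 : 2 * Rabs S ^ 2 <= unit_eps S)
    by (rewrite pow2_abs; apply unit_eps_ge).
  assert (hdiv : forall a b, Rabs (a / b) = Rabs a / Rabs b)
    by (intros; unfold Rdiv; rewrite Rabs_mult, Rabs_inv; reflexivity).
  assert (hR' : R' = / 4 * (ln (Rabs (r1 / r3)) ^ 2 + ln (Rabs (r2 / r4)) ^ 2) * (2 * ln eps)).
  { unfold R'. rewrite !hdiv, heps.
    apply Rabs_det3_log_hankel; nra. }
  split; [exact hR'|].
  rewrite hR', !hdiv, heps, abs_IZR; fold S.
  apply regulator_quotient_lt; lra.
Qed.
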